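(* The one-dimensional subalgebras of ${\rm A}_1$ are exactly $\langle e_1\rangle$, $\langle e_2\rangle$ and $\langle \alpha e_2+e_3\rangle$ ($\alpha\in\mathbb{C}$). Up to automorphisms of ${\rm A}_1$, every one-dimensional subalgebra of ${\rm A}_1$ is equivalent to $\langle e_1\rangle$ or $\langle e_2\rangle$.
   Context: ${\rm A}_1$ is the complex algebra with basis $e_1,e_2,e_3$ whose only nonzero products of basis elements are $e_1e_i=e_ie_1=e_i$ ($i=1,2,3$) (it carries the involution $\overline{e_1}=e_1,\overline{e_2}=e_2,\overline{e_3}=-e_3$, which plays no role here). A subalgebra is a linear subspace closed under multiplication (it need not contain $e_1$). Two subalgebras are equivalent up to automorphisms if one is mapped onto the other by an algebra automorphism (invertible linear map $\varphi$ with $\varphi(xy)=\varphi(x)\varphi(y)$). $\langle S\rangle$ denotes the linear span of $S$. *)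

From HB Require Import structures.
From mathcomp Require Import all_boot all_order all_algebra.
From mathcomp Require Export complex.
From mathcomp Require Import reals.
Set Implicit Arguments. Unset Strict Implicit. Unset Printing Implicit Defensive.
Import Order.TTheory GRing.Theory Num.Theory.
Local Open Scope ring_scope.

Section A1.
Variable F : fieldType.

(* Elements of A_1 are coordinate rows x = x_1 e1 + x_2 e2 + x_3 e3
   (indices 0,1,2 of 'I_3). *)
Definition e1 : 'rV[F]_3 := delta_mx 0 (0 : 'I_3).
Definition e2 : 'rV[F]_3 := delta_mx 0 (1 : 'I_3).
Definition e3 : 'rV[F]_3 := delta_mx 0 (2 : 'I_3).

(* Bilinear product of A_1: e1 e_i = e_i e1 = e_i, all other products of
   basis elements are 0. *)
Definition mulA (x y : 'rV[F]_3) : 'rV[F]_3 :=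
  \row_(k < 3) (if (k : nat) == 0%N then x 0 0 * y 0 0
                else x 0 0 * y 0 k + x 0 k * y 0 0).

Definition is_subalgebra (U : {vspace 'rV[F]_3}) : Prop :=
  forall x y, x \in U -> y \in U -> mulA x y \in U.

Definition is_automorphism (f : 'rV[F]_3 -> 'rV[F]_3) : Prop :=
  [/\ (forall (a : F) x y, f (a *: x + y) = a *: f x + f y),
      bijective f &
      (forall x y, f (mulA x y) = mulA (f x) (f y))].

Definition equiv_aut (U V : {vspace 'rV[F]_3}) : Prop :=
  exists f, is_automorphism f /\
    (forall v, v \in V <-> exists2 u, u \in U & f u = v).
End A1.

(** Since [x * x = (x1^2, 2 x1 x2, 2 x1 x3)] for [x = (x1, x2, x3)], a line
    [<[u]>] is a subalgebra iff [u] is an eigenvector of squaring: either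
    [u] has no [e1]-component, or it is a multiple of [e1].  The lines in the
    square-zero ideal [<e2, e3>] are [<[e2]>] and [<[alpha e2 + e3]>], and the
    automorphism fixing [e1] with [e2 |-> e3], [e3 |-> e2 - alpha e3] carries
    [alpha e2 + e3] to [e2]. *)

From Pilot Require Import Defs.
From HB Require Import structures.
From mathcomp Require Import all_boot all_order all_algebra.
From mathcomp Require Import complex reals.
From mathcomp Require Import ring.
Import Order.TTheory GRing.Theory Num.Theory.
Local Open Scope ring_scope.

(* [all_algebra] exports an unrelated [mulA] (from [fraction]). *)
Local Notation mulA := Defs.mulA.

Section OneDimSubalgebras.
Context {F : fieldType}.
Implicit Types (u v : 'rV[F]_3) (U : {vspace 'rV[F]_3}).

Lemma row3_coords u : u = u 0 0 *: e1 F + u 0 1 *: e2 F + u 0 2%:R *: e3 F.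
Proof.
apply/rowP => k; rewrite !mxE.
by case: k => [[|[|[|k]]] ?] //=; rewrite ?mulr1 ?mulr0 ?addr0 ?add0r //;
  congr (u _ _); apply/val_inj.
Qed.

Lemma row3P u v :
  u 0 0 = v 0 0 -> u 0 1 = v 0 1 -> u 0 2%:R = v 0 2%:R -> u = v.
Proof. by move=> h0 h1 h2; rewrite (row3_coords u) (row3_coords v) h0 h1 h2. Qed.

Lemma mulAZZ (a b : F) v : mulA (a *: v) (b *: v) = (a * b) *: mulA v v.
Proof. by apply/rowP => k; rewrite !mxE; case: ifP => _; ring. Qed.

Lemma vline_subalgebraP v : is_subalgebra <[v]>%VS <-> mulA v v \in <[v]>%VS.
Proof.
split=> [sv | vv_v x y /vlineP[a ->] /vlineP[b ->]].
  exact: sv _ _ (memv_line v) (memv_line v).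
by rewrite mulAZZ memvZ.
Qed.

Lemma vlineZ (c : F) v : c != 0 -> <[c *: v]>%VS = <[v]>%VS.
Proof.
move=> c0; have [->|v0] := eqVneq v 0; first by rewrite scaler0.
apply/eqP; rewrite eqEdim !dim_vline scaler_eq0 (negbTE c0) v0 /=.
by rewrite -memvE memvZ // memv_line.
Qed.

Lemma dimv1_vline U : \dim U = 1%N -> exists2 u, u != 0 & U = <[u]>%VS.
Proof.
move=> dimU; have U0 : vpick U != 0 by rewrite vpick0 -dimv_eq0 dimU.
exists (vpick U) => //; apply/eqP; rewrite eq_sym eqEdim dim_vline U0 dimU.
by rewrite -memvE memv_pick.
Qed.

Lemma sqr_in_vline_coords u : mulA u u \in <[u]>%VS ->
  u 0 0 = 0 \/ u 0 1 = 0 /\ u 0 2%:R = 0.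
Proof.
case/vlineP=> l /rowP sqr_u.
have := sqr_u 0; have := sqr_u 1; have := sqr_u 2%:R; rewrite !mxE /=.
set a := u 0 0 => sqr2 sqr1 sqr0.
have [a0 | a0] := eqVneq a 0; [by left | right].
have la : l = a by apply: (mulIf a0); rewrite -sqr0.
have kill z : a * z + z * a = a * z -> z = 0.
  move=> h; have /eqP : z * a = 0 by apply: (addrI (a * z)); rewrite addr0.
  by rewrite mulf_eq0 (negbTE a0) orbF => /eqP.
by rewrite la in sqr1 sqr2; split; apply: kill.
Qed.

Lemma sqr_in_vline_classify u : u != 0 -> mulA u u \in <[u]>%VS ->
  [\/ <[u]>%VS = <[e1 F]>%VS, <[u]>%VS = <[e2 F]>%VS
    | exists alpha : F, <[u]>%VS = <[alpha *: e2 F + e3 F]>%VS].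
Proof.
move=> u0 /sqr_in_vline_coords coords; have uE := row3_coords u.
case: coords => [a0 | [b0 c0]].
  have [c0 | c0] := eqVneq (u 0 2%:R) 0.
    have b0 : u 0 1 != 0.
      by apply: contraNneq u0 => b0; rewrite uE a0 b0 c0 !scale0r !addr0.
    by constructor 2; rewrite uE a0 c0 !scale0r addr0 add0r vlineZ.
  constructor 3; exists (u 0 1 / u 0 2%:R).
  rewrite -[RHS](vlineZ _ _ c0) scalerDr scalerA mulrC divfK //.
  by rewrite {1}uE a0 scale0r add0r.
have a0 : u 0 0 != 0.
  by apply: contraNneq u0 => a0; rewrite uE a0 b0 c0 !scale0r !addr0.
by constructor 1; rewrite uE b0 c0 !scale0r !addr0 vlineZ.
Qed.

Lemma mulA_e1e1 : mulA (e1 F) (e1 F) = e1 F.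
Proof. by apply: row3P; rewrite !mxE /=; ring. Qed.

Lemma mulA_e2e2 : mulA (e2 F) (e2 F) = 0.
Proof. by apply: row3P; rewrite !mxE /=; ring. Qed.

Lemma mulA_e2e3_sqr (alpha : F) :
  mulA (alpha *: e2 F + e3 F) (alpha *: e2 F + e3 F) = 0.
Proof. by apply: row3P; rewrite !mxE /=; ring. Qed.

Lemma coord_neq0 u (k : 'I_3) : u 0 k != 0 -> u != 0.
Proof. by apply: contraNneq => ->; rewrite mxE. Qed.

Lemma dim1_subalgebraP U :
  (is_subalgebra U /\ \dim U = 1%N) <->
  [\/ U = <[e1 F]>%VS, U = <[e2 F]>%VS
    | exists alpha : F, U = <[alpha *: e2 F + e3 F]>%VS].
Proof.
split=> [[sU /dimv1_vline[u u0 UE]] | ].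
  rewrite UE in sU *; apply: sqr_in_vline_classify => //.
  exact/vline_subalgebraP.
case=> [|| [alpha]] ->; rewrite vline_subalgebraP dim_vline.
- by rewrite mulA_e1e1 memv_line (@coord_neq0 _ 0) // mxE oner_eq0.
- by rewrite mulA_e2e2 mem0v (@coord_neq0 _ 1) // mxE oner_eq0.
- rewrite mulA_e2e3_sqr mem0v (@coord_neq0 _ 2%:R) // !mxE /=.
  by rewrite mulr0 add0r oner_eq0.
Qed.

End OneDimSubalgebras.

Section Automorphisms.
Context {F : fieldType}.
Implicit Types (f : 'rV[F]_3 -> 'rV[F]_3) (u w : 'rV[F]_3) (U : {vspace 'rV[F]_3}).

Lemma automorphismZ f k w : is_automorphism f -> f (k *: w) = k *: f w.
Proof.
case=> lin _ _; have f0 : f 0 = 0.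
  have := lin 1 0 0; rewrite scale1r addr0 scale1r => f0_twice.
  by apply: (@addrI _ (f 0)); rewrite addr0 -f0_twice.
by have := lin k w 0; rewrite addr0 f0 addr0.
Qed.

Lemma equiv_aut_refl U : equiv_aut U U.
Proof.
exists id; split; first by split=> //; exists id.
by move=> v; split=> [Uv | [u Uu <-]]; first exists v.
Qed.

Lemma equiv_aut_vline w f : is_automorphism f -> equiv_aut <[w]>%VS <[f w]>%VS.
Proof.
move=> autf; exists f; split=> // v; split.
  by case/vlineP=> k ->; exists (k *: w); rewrite ?memvZ ?memv_line ?automorphismZ.
by case=> _ /vlineP[k ->] <-; rewrite automorphismZ // memvZ ?memv_line.
Qed.

Definition mix23 (alpha : F) u : 'rV[F]_3 :=
  u 0 0 *: e1 F + u 0 2%:R *: e2 F + (u 0 1 - alpha * u 0 2%:R) *: e3 F.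

Lemma mix23_automorphism alpha : is_automorphism (mix23 alpha).
Proof.
split.
- by move=> a x y; apply: row3P; rewrite !mxE /=; ring.
- exists (fun u => u 0 0 *: e1 F + (u 0 2%:R + alpha * u 0 1) *: e2 F + u 0 1 *: e3 F).
    by move=> x; apply: row3P; rewrite !mxE /=; ring.
  by move=> x; apply: row3P; rewrite !mxE /=; ring.
- by move=> x y; apply: row3P; rewrite !mxE /=; ring.
Qed.

Lemma mix23_e2e3 alpha : mix23 alpha (alpha *: e2 F + e3 F) = e2 F.
Proof. by apply: row3P; rewrite !mxE /=; ring. Qed.

End Automorphisms.

Theorem mainTheorem4 (R : realType) :
  (forall U : {vspace 'rV[R[i]]_3},
     (is_subalgebra U /\ \dim U = 1%N) <->
     [\/ U = <[e1 _]>%VS, U = <[e2 _]>%VS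
       | exists alpha : R[i], U = <[alpha *: e2 _ + e3 _]>%VS]) /\
  (forall U : {vspace 'rV[R[i]]_3},
     is_subalgebra U -> \dim U = 1%N ->
     equiv_aut U <[e1 _]>%VS \/ equiv_aut U <[e2 _]>%VS).
Proof.
split=> [U | U sU dimU]; first exact: dim1_subalgebraP.
case: (proj1 (dim1_subalgebraP U) (conj sU dimU)) => [|| [alpha]] ->.
- by left; apply: equiv_aut_refl.
- by right; apply: equiv_aut_refl.
- right; have := equiv_aut_vline (alpha *: e2 _ + e3 _) _ (mix23_automorphism alpha).
  by rewrite mix23_e2e3.
Qed.
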